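(* Let $P$ be a poset on $[n]$ whose labeling is natural (the identity permutation $e$ is a linear extension), and let $x_1,\dots,x_n$ be strictly positive reals. Let $M$ be the transition matrix of the transposition graph of $P$. Define, for $\pi\in\mathcal{L}(P)$, $$w(\pi)=\prod_{i=1}^n x_{\pi_i}^{\,i-\pi_i}.$$ Then $w$ is the stationary state of the transposition graph Markov chain normalized by $w(e)=1$, i.e. $\sum_{\pi\in\mathcal{L}(P)}M(\pi',\pi)\,w(\pi)=0$ for every $\pi'\in\mathcal{L}(P)$.
   Context: Linear extensions: $\mathcal{L}(P)=\{\pi\in S_n : i\prec j \text{ in } P \Rightarrow \pi^{-1}_i<\pi^{-1}_j\}$, written in one-line notation $\pi=\pi_1\cdots\pi_n$. For $1\le j<n$, $\pi\tau_j$ is obtained from $\pi$ by swapping $\pi_j$ and $\pi_{j+1}$ if they are incomparable in $P$, and $\pi\tau_j=\pi$ otherwise. Transposition graph: vertex set $\mathcal{L}(P)$, and for each $\pi$ and $j\in[n-1]$ a directed edge $\pi\to\pi\tau_j$ of weight $x_{\pi_j}$. Transition matrix $M$: for $\pi'\neq\pi$, $M(\pi',\pi)$ is the sum of weights of edges $\pi\to\pi'$; $M(\pi,\pi)$ is minus the sum of weights of edges $\pi\to\pi'$ with $\pi'\ne\pi$. *)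

From HB Require Import structures.
From mathcomp Require Import all_boot all_order all_algebra all_fingroup.
Set Implicit Arguments. Unset Strict Implicit. Unset Printing Implicit Defensive.
Import Order.TTheory GRing.Theory Num.Theory.
Local Open Scope ring_scope.

(* The ground set [n] is encoded 0-based as 'I_n; positions likewise.
   P : rel 'I_n is the strict order relation (i ≺ j). A permutation
   pi : {perm 'I_n} is read in one-line notation: pi_k = pi k. *)

Definition linext n (P : rel 'I_n) (pi : {perm 'I_n}) : bool :=
  [forall i, forall j, P i j ==> ((pi^-1)%g i < (pi^-1)%g j)%N].

Definition comparable n (P : rel 'I_n) (a b : 'I_n) : bool := P a b || P b a.

Definition nextpos n (j : 'I_n) : 'I_n :=
  if insub (j.+1) is Some k then k else j.

(* pi tau_j : swap entries in positions j, j+1 if incomparable, else pi *)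
Definition tau n (P : rel 'I_n) (pi : {perm 'I_n}) (j : 'I_n) : {perm 'I_n} :=
  let k := nextpos j in
  if (k != j) && ~~ comparable P (pi j) (pi k) then (tperm j k * pi)%g else pi.

Definition transM (R : ringType) n (P : rel 'I_n) (x : 'I_n -> R)
    (pi' pi : {perm 'I_n}) : R :=
  if pi' != pi then
    \sum_(j < n | (j.+1 < n)%N && (tau P pi j == pi')) x (pi j)
  else
    - \sum_(j < n | (j.+1 < n)%N && (tau P pi j != pi)) x (pi j).

(* w(pi) = prod_i x_{pi_i}^{i - pi_i} (the difference is index-shift invariant) *)
Definition wt (R : unitRingType) n (x : 'I_n -> R) (pi : {perm 'I_n}) : R :=
  \prod_(i < n) x (pi i) ^ ((i : nat)%:Z - (pi i : nat)%:Z).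

From Pilot Require Import Defs.
From HB Require Import structures.
From mathcomp Require Import all_boot all_order all_algebra all_fingroup.
From mathcomp Require Import zify ring.
Import Order.TTheory GRing.Theory Num.Theory.
Set Implicit Arguments. Unset Strict Implicit.
Local Open Scope ring_scope.

(* The chain satisfies detailed balance edge by edge: swapping the entries
   a = pi_j and b = pi_{j+1} multiplies w by x_a / x_b, so
   x_b w(pi tau_j) = x_a w(pi).  Since tau_j is an involution preserving
   linear extensions, the inflow into pi' along position j is exactly the
   outflow x_{pi'_j} w(pi') along position j, and summing over j gives
   stationarity. *)

Lemma nextposE n (j : 'I_n) : (j.+1 < n)%N -> val (nextpos j) = j.+1.
Proof. by move=> lt_j1n; rewrite /nextpos; case: insubP => [k _ -> //|]; rewrite lt_j1n. Qed.

Lemma nextpos_neq n (j : 'I_n) : (j.+1 < n)%N -> nextpos j != j.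
Proof. by move=> lt_j1n; apply/eqP => /(congr1 val); rewrite nextposE //=; lia. Qed.

Lemma comparableC n (P : rel 'I_n) (a b : 'I_n) : Defs.comparable P a b = Defs.comparable P b a.
Proof. by rewrite /Defs.comparable orbC. Qed.

Lemma tauK n (P : rel 'I_n) (j : 'I_n) : involutive (tau P ^~ j).
Proof.
move=> pi; rewrite /tau; set k := nextpos j.
have [/andP[kj nc]|nsw] := boolP ((k != j) && ~~ Defs.comparable P (pi j) (pi k)).
  by rewrite kj !permM tpermL tpermR comparableC nc /= mulgA tperm2 mul1g.
by rewrite (negPf nsw).
Qed.

Lemma tau_linext n (P : rel 'I_n) pi (j : 'I_n) :
  linext P pi -> linext P (tau P pi j).
Proof.
move=> L; rewrite /tau; set k := nextpos j.
case: ifP => [/andP[kj nc]|//].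
have lt_j1n : (j.+1 < n)%N.
  by case: ltnP kj => // ge; rewrite /k /nextpos insubN -?ltnNge ?eqxx.
have hk := nextposE lt_j1n; rewrite -/k in hk.
apply/forallP => a; apply/forallP => b; apply/implyP => Pab.
have := forallP (forallP L a) b; rewrite Pab /= => lt.
rewrite !invMg tpermV !permM.
move: lt nc; set p := (pi^-1)%g a; set q := (pi^-1)%g b.
have ea : a = pi p by rewrite /p permKV.
have eb : b = pi q by rewrite /q permKV.
(* Only a pair sitting at positions j, j+1 changes relative order, and that
   pair is incomparable. *)
case: tpermP => [ep|ep|np1 np2]; case: tpermP => [eq|eq|nq1 nq2] //=;
  rewrite ?ep ?eq ?hk => lt nc; try lia.
- by move: nc; rewrite -ep -eq -ea -eb /Defs.comparable Pab.
- have : (q : nat) != (j : nat) by apply/eqP => /val_inj.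
  have : (q : nat) != (k : nat) by apply/eqP => /val_inj.
  rewrite hk; lia.
- have : (p : nat) != (j : nat) by apply/eqP => /val_inj.
  have : (p : nat) != (k : nat) by apply/eqP => /val_inj.
  rewrite hk; lia.
Qed.

Lemma wt_tperm_next (R : fieldType) n (x : 'I_n -> R) (xnz : forall i, x i != 0)
  (pi : {perm 'I_n}) (j : 'I_n) : (j.+1 < n)%N ->
  x (pi (nextpos j)) * wt x (tperm j (nextpos j) * pi)%g = x (pi j) * wt x pi.
Proof.
move=> lt_j1n; set k := nextpos j.
have hk : (k : nat) = j.+1 := nextposE lt_j1n.
have kj : k != j := nextpos_neq lt_j1n.
rewrite /wt (bigD1 j) //= (bigD1 k) //= [in RHS](bigD1 j) //= [in RHS](bigD1 k) //=.
rewrite (eq_bigr (fun i => x (pi i) ^ ((i : nat)%:Z - (pi i : nat)%:Z))); last first.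
  by move=> i /andP[ij ik]; rewrite permM tpermD // eq_sym.
rewrite !permM tpermL tpermR.
have shiftj : (k : nat)%:Z - (pi j : nat)%:Z = ((j : nat)%:Z - (pi j : nat)%:Z) + 1.
  by rewrite hk; lia.
have shiftk : (k : nat)%:Z - (pi k : nat)%:Z = ((j : nat)%:Z - (pi k : nat)%:Z) + 1.
  by rewrite hk; lia.
rewrite shiftj shiftk !expfzDr // !expr1z.
ring.
Qed.

Lemma wt_tau_balance (R : fieldType) n (P : rel 'I_n) (x : 'I_n -> R)
  (xnz : forall i, x i != 0) (pi : {perm 'I_n}) (j : 'I_n) : (j.+1 < n)%N ->
  x (tau P pi j j) * wt x (tau P pi j) = x (pi j) * wt x pi.
Proof.
move=> lt_j1n; rewrite /tau; case: ifP => // _.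
by rewrite permM tpermL; exact: wt_tperm_next.
Qed.

Lemma sum_involution_preimage (T : finType) (V : nmodType) (s : T -> T)
  (sK : involutive s) (A : pred T) (y : T) (F : T -> V) : A (s y) ->
  \sum_(z | [&& A z, z != y & s z == y]) F z = if s y != y then F (s y) else 0.
Proof.
move=> Asy; case: ifP => [sy_ny|sy_y].
  rewrite (big_pred1 (s y)) // => z /=.
  by rewrite (can2_eq sK sK); case: (z =P s y) => [->|]; rewrite ?Asy ?sy_ny ?andbF.
apply: big_pred0 => z; rewrite (can2_eq sK sK).
by case: (z =P s y) => [->|]; rewrite ?sy_y ?andbF.
Qed.

Theorem theorem4p7 (R : realFieldType) (n : nat) (P : rel 'I_n)
    (Pirr : irreflexive P) (Ptr : transitive P)
    (Pnat : linext P 1%g)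
    (x : 'I_n -> R) (xpos : forall i, 0 < x i) :
  wt x 1%g = 1 /\
  forall pi' : {perm 'I_n}, linext P pi' ->
    \sum_(pi : {perm 'I_n} | linext P pi) transM P x pi' pi * wt x pi = 0.
Proof.
have xnz i : x i != 0 by rewrite gt_eqF.
split; first by rewrite /wt big1 // => i _; rewrite perm1 subrr expr0z.
move=> pi' L'; rewrite (bigD1 pi') //= {1}/transM eqxx /= mulNr addrC.
apply/eqP; rewrite subr_eq0 mulr_suml; apply/eqP.
rewrite (eq_bigr (fun pi => \sum_(j < n | (j.+1 < n)%N && (tau P pi j == pi'))
                             x (pi j) * wt x pi)); last first.
  by move=> pi /andP[_ ne]; rewrite /transM eq_sym ne mulr_suml.
rewrite (exchange_big_dep (fun j : 'I_n => (j.+1 < n)%N)) /=; last by move=> ? ? _ /andP[].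
rewrite [RHS]big_mkcondr; apply: eq_bigr => j lt_j1n.
rewrite (eq_bigl (fun pi => [&& linext P pi, pi != pi' & tau P pi j == pi'])); last first.
  by move=> pi; rewrite lt_j1n -andbA.
rewrite sum_involution_preimage ?tau_linext //; last exact: tauK.
by rewrite wt_tau_balance.
Qed.
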